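(* Let $E$ be a Banach space over $\mathbb C_p$ and let $c_0(E)$ be the Banach space of sequences $x=(x_0,x_1,x_2,\ldots)$ with $x_j\in E$ and $\|x_j\|_E\to0$, normed by $\|x\|=\sup_{j\ge0}\|x_j\|_E$. Let $T_E$ be the backward shift on $c_0(E)$, $T_E(x_0,x_1,x_2,\ldots)=(x_1,x_2,\ldots)$. Let $A$ be a bounded linear operator on $E$ with $\|A\|\le1$ such that $\|A^nu\|_E\to0$ as $n\to\infty$ for every $u\in E$. Then there exist a closed subspace $Y\subset c_0(E)$ invariant under $T_E$ and a surjective linear isometry $W:E\to Y$ such that $A=W^{-1}T_E^YW$, where $T_E^Y$ denotes the restriction of $T_E$ to $Y$.
   Context: $p$ is a prime and $\mathbb C_p$ is the completion of an algebraic closure of the $p$-adic field $\mathbb Q_p$ with respect to the extension of the $p$-adic absolute value; Banach spaces over $\mathbb C_p$ are non-Archimedean (norm satisfying the ultrametric inequality). *)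

From HB Require Import structures.
From mathcomp Require Import all_boot all_order all_algebra.
From mathcomp Require Import all_classical all_reals.
Set Implicit Arguments. Unset Strict Implicit. Unset Printing Implicit Defensive.
Import Order.TTheory GRing.Theory Num.Theory.
Local Open Scope ring_scope.
Local Open Scope classical_set_scope.

Definition nonarch_abs (R : realType) (K : fieldType) (abs : K -> R) : Prop :=
  [/\ forall x, 0 <= abs x,
      forall x, abs x = 0 <-> x = 0,
      forall x y, abs (x * y) = abs x * abs y &
      forall x y, abs (x + y) <= Num.max (abs x) (abs y)].

Definition abs_complete (R : realType) (K : fieldType) (abs : K -> R) : Prop :=
  forall u : nat -> K,
    (forall e : R, 0 < e -> exists N, forall m n, (N <= m)%N -> (N <= n)%N ->
        abs (u m - u n) < e) ->
    exists l, forall e : R, 0 < e -> exists N, forall n, (N <= n)%N ->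
        abs (u n - l) < e.

Definition extends_padic (R : realType) (K : fieldType) (abs : K -> R) (p : nat)
  : Prop :=
  forall n : nat, (0 < n)%N -> abs (n%:R) = (p%:R : R) ^- logn p n.

Definition nonarch_banach (R : realType) (K : fieldType) (abs : K -> R)
  (E : lmodType K) (nE : E -> R) : Prop :=
  [/\ forall u, nE u = 0 <-> u = 0,
      forall (a : K) u, nE (a *: u) = abs a * nE u,
      forall u v, nE (u + v) <= Num.max (nE u) (nE v) &
      forall u : nat -> E,
        (forall e : R, 0 < e -> exists N, forall m n, (N <= m)%N -> (N <= n)%N ->
            nE (u m - u n) < e) ->
        exists l, forall e : R, 0 < e -> exists N, forall n, (N <= n)%N ->
            nE (u n - l) < e].

Definition c0 (R : realType) (K : fieldType) (E : lmodType K) (nE : E -> R)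
  (x : nat -> E) : Prop :=
  forall e : R, 0 < e -> exists N, forall j, (N <= j)%N -> nE (x j) < e.

Definition c0norm (R : realType) (K : fieldType) (E : lmodType K) (nE : E -> R)
  (x : nat -> E) : R := sup (range (fun j => nE (x j))).

Definition bshift (E : Type) (x : nat -> E) : nat -> E := fun j => x j.+1.

Definition closed_subspace_c0 (R : realType) (K : fieldType) (E : lmodType K)
  (nE : E -> R) (Y : set (nat -> E)) : Prop :=
  [/\ Y `<=` c0 nE,
      Y (fun _ => 0),
      forall x y, Y x -> Y y -> Y (fun j => x j + y j),
      forall (a : K) x, Y x -> Y (fun j => a *: x j) &
      forall (xs : nat -> nat -> E) (x : nat -> E),
        (forall n, Y (xs n)) -> c0 nE x ->
        (forall e : R, 0 < e -> exists N, forall n, (N <= n)%N ->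
            c0norm nE (fun j => xs n j - x j) < e) ->
        Y x].

From HB Require Import structures.
From mathcomp Require Import all_boot all_order all_algebra.
From mathcomp Require Import all_classical all_reals.
From mathcomp Require Import lra.
Set Implicit Arguments. Unset Strict Implicit. Unset Printing Implicit Defensive.
Import Order.TTheory GRing.Theory Num.Theory.
Local Open Scope ring_scope.
Local Open Scope classical_set_scope.

(* The isometry is the trajectory map W u = (A^j u)_j.  Since ||A|| <= 1 the
   sup defining ||W u|| is attained at j = 0, so W is isometric, and
   W (A u) = T_E (W u) holds by construction.  The range of W is closed: if
   trajectories W u_n converge to x, then by the ultrametric inequality
   ||x_j - A^j x_0|| <= max (||x_j - A^j u_n||, ||A^j (u_n - x_0)||), and both
   terms are bounded by ||W u_n - x||; hence x = W x_0. *)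

Section NonArchimedeanNorm.
Variables (R : realType) (K : fieldType) (abs : K -> R).
Variables (E : lmodType K) (nE : E -> R).
Hypotheses (habs : nonarch_abs abs) (hnE : nonarch_banach abs nE).

Lemma nonarch_abs1 : abs 1 = 1.
Proof.
case: habs => _ abs_eq0 absM _.
have abs1_neq0 : abs 1 != 0 by apply/eqP => /abs_eq0 /eqP; rewrite oner_eq0.
by apply: (mulIf abs1_neq0); rewrite mul1r -absM mulr1.
Qed.

Lemma nonarch_absN1 : abs (-1) = 1.
Proof.
case: habs => abs_ge0 _ absM _.
have := absM (-1) (-1); rewrite mulrNN mulr1 nonarch_abs1.
have := abs_ge0 (-1); nra.
Qed.

Lemma nonarch_normN u : nE (- u) = nE u.
Proof. by case: hnE => _ nEZ _ _; rewrite -scaleN1r nEZ nonarch_absN1 mul1r. Qed.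

Lemma nonarch_norm0 : nE 0 = 0.
Proof. by case: hnE => nE_eq0 _ _ _; apply/nE_eq0. Qed.

Lemma nonarch_norm_ge0 u : 0 <= nE u.
Proof.
case: hnE => _ _ nED _.
by have := nED u (- u); rewrite subrr nonarch_normN maxxx nonarch_norm0.
Qed.

Lemma nonarch_normB u v : nE (u - v) <= Num.max (nE u) (nE v).
Proof. by case: hnE => _ _ nED _; rewrite -(nonarch_normN v) nED. Qed.

Lemma nonarch_norm_le_eq0 u : (forall e : R, 0 < e -> nE u <= e) -> u = 0.
Proof.
case: hnE => nE_eq0 _ _ _ small; apply/nE_eq0/eqP.
rewrite eq_le nonarch_norm_ge0 andbT; apply/ler_addgt0Pr => e e_gt0.
by rewrite add0r small.
Qed.

Lemma c0B (x y : nat -> E) :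
  c0 nE x -> c0 nE y -> c0 nE (fun j => x j - y j).
Proof.
move=> x0 y0 e e_gt0.
have [[Nx Hx] [Ny Hy]] := (x0 e e_gt0, y0 e e_gt0).
exists (maxn Nx Ny) => j; rewrite geq_max => /andP[jx jy].
by apply: le_lt_trans (nonarch_normB _ _) _; rewrite gt_max Hx ?Hy.
Qed.

End NonArchimedeanNorm.

Section SupNorm.
Variables (R : realType) (K : fieldType) (E : lmodType K) (nE : E -> R).

Lemma prefix_ub (f : nat -> R) (N : nat) :
  exists M, forall j, (j < N)%N -> f j <= M.
Proof.
elim: N => [|N [M HM]]; first by exists 0.
exists (Num.max M (f N)) => j; rewrite ltnS leq_eqVlt => /orP[/eqP ->|jN].
  by rewrite le_max lexx orbT.
by rewrite le_max HM.
Qed.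

Lemma c0_has_ubound (x : nat -> E) :
  c0 nE x -> has_ubound (range (fun j => nE (x j))).
Proof.
move=> /(_ 1 ltr01) [N HN]; have [M HM] := prefix_ub (fun j => nE (x j)) N.
exists (Num.max M 1) => _ [j _ <-].
case: (ltnP j N) => jN; first by rewrite le_max HM.
by rewrite le_max (ltW (HN j jN)) orbT.
Qed.

Lemma c0norm_ge (x : nat -> E) j : c0 nE x -> nE (x j) <= c0norm nE x.
Proof. by move=> x0; apply: (ub_le_sup (c0_has_ubound x0)); exists j. Qed.

End SupNorm.

Section Trajectory.
Variables (K : fieldType) (E : lmodType K) (A : {linear E -> E}).

Definition trajectory (u : E) : nat -> E := fun j => iter j A u.

Lemma trajectoryD u v j : trajectory (u + v) j = trajectory u j + trajectory v j.
Proof. by elim: j => //= j ->; rewrite linearD. Qed.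

Lemma trajectoryZ a u j : trajectory (a *: u) j = a *: trajectory u j.
Proof. by elim: j => //= j ->; rewrite linearZ. Qed.

Lemma trajectoryB u v j : trajectory (u - v) j = trajectory u j - trajectory v j.
Proof. by elim: j => //= j ->; rewrite linearB. Qed.

Lemma trajectory0 : trajectory 0 = fun=> 0.
Proof. by apply: funext; elim=> //= j ->; rewrite linear0. Qed.

Lemma trajectory_shift u : trajectory (A u) = bshift (trajectory u).
Proof. by apply: funext => j; rewrite /bshift /trajectory iterSr. Qed.

Variables (R : realType) (abs : K -> R) (nE : E -> R).
Hypothesis A_contr : forall u, nE (A u) <= nE u.
Hypothesis A_c0 : forall u, c0 nE (trajectory u).

Lemma trajectory_contr u j : nE (trajectory u j) <= nE u.
Proof. by elim: j => //= j IH; apply: le_trans (A_contr _) IH. Qed.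

Lemma c0norm_trajectory u : c0norm nE (trajectory u) = nE u.
Proof.
apply/eqP; rewrite eq_le (c0norm_ge 0 (A_c0 u)) andbT.
apply: ge_sup; first by exists (nE u), 0%N.
by move=> _ [j _ <-]; apply: trajectory_contr.
Qed.

Hypotheses (habs : nonarch_abs abs) (hnE : nonarch_banach abs nE).

Lemma trajectory_limit (xs : nat -> nat -> E) (x : nat -> E) :
  (forall n, range trajectory (xs n)) -> c0 nE x ->
  (forall e : R, 0 < e -> exists N, forall n, (N <= n)%N ->
      c0norm nE (fun j => xs n j - x j) < e) ->
  x = trajectory (x 0%N).
Proof.
move=> xs_traj x0 xs_cvg; apply: funext => j; apply/eqP; rewrite eq_sym -subr_eq0.
apply/eqP/(nonarch_norm_le_eq0 habs hnE) => e e_gt0.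
have [N HN] := xs_cvg e e_gt0; have [u _ Hu] := xs_traj N.
pose d k := xs N k - x k.
have d0 : c0 nE d by rewrite /d -Hu; apply: (c0B habs hnE).
have d_lt : c0norm nE d < e := HN N (leqnn N).
have -> : trajectory (x 0%N) j - x j = - trajectory (d 0%N) j + d j.
  rewrite /d -Hu trajectoryB [trajectory u 0%N]/trajectory /=.
  by rewrite opprB addrA subrK.
case: hnE => _ _ nED _; apply: le_trans (nED _ _) _.
rewrite (nonarch_normN habs hnE) ge_max.
rewrite !(le_trans _ (ltW d_lt)) ?c0norm_ge //.
exact: le_trans (trajectory_contr _ _) (c0norm_ge _ d0).
Qed.

End Trajectory.

Unset Implicit Arguments.

Theorem theorem3 (R : realType) (p : nat) (K : closedFieldType) (abs : K -> R)
  (E : lmodType K) (nE : E -> R) (A : {linear E -> E}) :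
  prime p -> nonarch_abs abs -> abs_complete abs -> extends_padic abs p ->
  nonarch_banach abs nE ->
  (forall u, nE (A u) <= nE u) ->
  (forall u, forall e : R, 0 < e -> exists N, forall n, (N <= n)%N ->
      nE (iter n A u) < e) ->
  exists (Y : set (nat -> E)) (W : E -> nat -> E),
    closed_subspace_c0 nE Y /\
    (forall x, Y x -> Y (bshift x)) /\
    (forall (a : K) u v j, W (a *: u + v) j = a *: W u j + W v j) /\
    (forall u, Y (W u)) /\
    (forall y, Y y -> exists u, W u = y) /\
    (forall u, c0norm nE (W u) = nE u) /\
    (forall u, W (A u) = bshift (W u)).
Proof.
move=> _ habs _ _ hnE A_contr A_to0.
have A_c0 u : c0 nE (trajectory A u) by move=> e; apply: A_to0.
exists (range (trajectory A)), (trajectory A).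
split; [split | split; [|split; [|split; [|split; [|split]]]]].
- by move=> _ [u _ <-].
- by exists 0 => //; apply: trajectory0.
- move=> _ _ [u _ <-] [v _ <-]; exists (u + v) => //.
  by apply: funext => j; rewrite trajectoryD.
- move=> a _ [u _ <-]; exists (a *: u) => //.
  by apply: funext => j; rewrite trajectoryZ.
- move=> xs x xs_traj x0 xs_cvg; exists (x 0%N) => //.
  by rewrite -(trajectory_limit A_contr A_c0 habs hnE xs_traj x0 xs_cvg).
- by move=> _ [u _ <-]; exists (A u) => //; apply: trajectory_shift.
- by move=> a u v j; rewrite trajectoryD trajectoryZ.
- by move=> u; exists u.
- by move=> y [u _ <-]; exists u.
- exact: c0norm_trajectory.
- exact: trajectory_shift.
Qed.
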